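(* Let $G$ and $G'$ be connected graphs of bounded degree which are quasi-isometric. If $G$ is extraterrestrial, then $G'$ is extraterrestrial.
   Context: A graph $G=(V,E)$ has undirected edges; $d_G$ is the shortest-path metric on $V$. A path of length $n$ is a sequence $w_0,\dots,w_n$ of distinct vertices with consecutive ones adjacent. For finite $A,B\subseteq V$, a matching is a relation $M\subseteq A\times B$ whose two coordinate projections are injective; it is complete if it induces a bijection $A\to B$; it is by paths of length at most $k$ if $d_G(u,v)\le k$ for every $(u,v)\in M$. For integers $m,k,r\ge 0$, an $(m,k,r)$-UFO in $G$ is a triple $(U,F,O)$ of pairwise disjoint finite subsets of $V$, with $U$ nonempty, such that: (1) $|U|\ge m|F|$; (2) there is a complete matching between $U$ and $O$ by paths of length at most $k$; (3) every path in $G$ from a vertex of $U$ to a vertex of $O$ either contains a vertex of $F$ or has length at least $r$. A graph $G$ is extraterrestrial if for every $m\in\mathbb N$ there exists $k\in\mathbb N$ such that for every $r\in\mathbb N$ there exists an $(m,k,r)$-UFO in $G$. Graphs $G=(V,E)$, $G'=(V',E')$ are quasi-isometric if there are $f:V\to V'$ and constants $A,B,C>0$ with $\frac1A d_G(v_1,v_2)-B\le d_{G'}(f(v_1),f(v_2))\le A d_G(v_1,v_2)+B$ for all $v_1,v_2\in V$, and every $v'\in V'$ is at $d_{G'}$-distance at most $C$ from $f(V)$. *)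

From Stdlib Require Import Reals Lra Lia List Arith.
Import ListNotations.
Open Scope R_scope.

Section Graphs.
Context {V : Type} (adj : V -> V -> Prop).

Definition simple_graph : Prop :=
  (forall u v, adj u v -> adj v u) /\ (forall v, ~ adj v v).

Fixpoint chain (p : list V) : Prop :=
  match p with
  | [] => True
  | x :: q => match q with
              | [] => True
              | y :: _ => adj x y /\ chain q
              end
  end.

Definition is_path_from_to (p : list V) (u v : V) : Prop :=
  NoDup p /\ chain p /\ hd_error p = Some u /\ last p u = v /\ p <> [].

Definition path_length (p : list V) : nat := Nat.pred (length p).

Definition is_dist (u v : V) (n : nat) : Prop :=
  (exists p, is_path_from_to p u v /\ path_length p = n) /\
  (forall p, is_path_from_to p u v -> (n <= path_length p)%nat).

Definition dist_le (u v : V) (k : nat) : Prop :=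
  exists p, is_path_from_to p u v /\ (path_length p <= k)%nat.

Definition connected : Prop :=
  forall u v, exists p, is_path_from_to p u v.

Definition bounded_degree : Prop :=
  exists D : nat, forall v (l : list V), NoDup l ->
    (forall w, In w l -> adj v w) -> (length l <= D)%nat.

(* finite subsets of V are represented by duplicate-free lists *)
Definition disjoint (A B : list V) : Prop := forall x, In x A -> ~ In x B.

(* complete matching between A and B by paths of length at most k:
   a relation M ⊆ A × B with injective coordinate projections that
   induces a bijection A -> B, with d(u,v) <= k for (u,v) ∈ M *)
Definition complete_matching_le (A B : list V) (k : nat) : Prop :=
  exists M : V -> V -> Prop,
    (forall a b, M a b -> In a A /\ In b B) /\
    (forall a b b', M a b -> M a b' -> b = b') /\
    (forall a a' b, M a b -> M a' b -> a = a') /\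
    (forall a, In a A -> exists b, M a b) /\
    (forall b, In b B -> exists a, M a b) /\
    (forall a b, M a b -> dist_le a b k).

Definition is_UFO (m k r : nat) (U F O : list V) : Prop :=
  NoDup U /\ NoDup F /\ NoDup O /\
  disjoint U F /\ disjoint U O /\ disjoint F O /\
  U <> [] /\
  (m * length F <= length U)%nat /\
  complete_matching_le U O k /\
  (forall p u o, In u U -> In o O -> is_path_from_to p u o ->
     (exists x, In x p /\ In x F) \/ (r <= path_length p)%nat).

Definition extraterrestrial : Prop :=
  forall m : nat, exists k : nat, forall r : nat,
    exists U F O : list V, is_UFO m k r U F O.

End Graphs.

Definition quasi_isometric {V V' : Type} (adj : V -> V -> Prop)
  (adj' : V' -> V' -> Prop) : Prop :=
  exists (f : V -> V') (A B C : R), 0 < A /\ 0 < B /\ 0 < C /\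
    (forall v1 v2 n n', is_dist adj v1 v2 n ->
       is_dist adj' (f v1) (f v2) n' ->
       INR n / A - B <= INR n' /\ INR n' <= A * INR n + B) /\
    (forall v', exists v n, is_dist adj' v' (f v) n /\ INR n <= C).

From Stdlib Require Import Reals List Arith Lia Lra ClassicalEpsilon Classical.
Import ListNotations.
Local Open Scope nat_scope.

(* Fix a quasi-isometry f : G -> G' with a coarse inverse g.  Given m, take a UFO (U, F, O)
   of G for a much larger multiplier and push its matched pairs (u, o) forward by f.  Pairs
   whose images collide are thinned out greedily (the fibres of f lie in balls of bounded
   size, so a fixed fraction survives), and pairs with an image in F', a bounded-radius
   neighbourhood of f(F) of size O(|F|), are dropped.  A path of G' between the surviving
   images that avoids F' is pulled back by g to a walk of G from u to o that avoids F and
   has length linear in that of the path, so a large separation r in G forces the path to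
   be long: (f(U), F', f(O)) is a UFO of G'. *)

Definition cdec (P : Prop) : bool := if excluded_middle_informative P then true else false.

Lemma cdec_spec (P : Prop) : cdec P = true <-> P.
Proof.
  unfold cdec; destruct (excluded_middle_informative P); split; auto; try easy.
Qed.

Section Lists.
Context {A : Type}.

Lemma NoDup_map_inj {B} (h : A -> B) l x y :
  NoDup (map h l) -> In x l -> In y l -> h x = h y -> x = y.
Proof.
  induction l as [|a l IH]; simpl; intros Hnd Hx Hy Hxy; [contradiction|].
  inversion Hnd as [|? ? Ha Hl]; subst.
  destruct Hx as [<-|Hx], Hy as [<-|Hy]; auto.
  - exfalso; apply Ha; rewrite Hxy; apply in_map; auto.
  - exfalso; apply Ha; rewrite <- Hxy; apply in_map; auto.
Qed.

Lemma length_le_of_inj_into {B} (h : A -> B) t (T : list B) :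
  NoDup t -> (forall x y, In x t -> In y t -> h x = h y -> x = y) ->
  (forall x, In x t -> In (h x) T) -> length t <= length T.
Proof.
  intros Hnd Hinj HT; rewrite <- (length_map h); apply NoDup_incl_length.
  - apply NoDup_map_NoDup_ForallPairs; auto.
  - intros z Hz; apply in_map_iff in Hz as [x [<- Hx]]; auto.
Qed.

Lemma split_by_cases (P Q : A -> Prop) s :
  NoDup s -> (forall x, In x s -> P x \/ Q x) ->
  exists s1 s2, NoDup s1 /\ NoDup s2 /\ incl s1 s /\ incl s2 s /\
    (forall x, In x s1 -> P x) /\ (forall x, In x s2 -> Q x) /\
    length s = length s1 + length s2.
Proof.
  intros Hnd Hs.
  exists (filter (fun x => cdec (P x)) s), (filter (fun x => negb (cdec (P x))) s).
  repeat split; try (apply NoDup_filter; assumption);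
    try (intros x Hx; apply filter_In in Hx as [Hx HPx]).
  - exact Hx.
  - exact Hx.
  - now apply cdec_spec.
  - destruct (Hs x Hx) as [HP|HQ]; auto.
    apply cdec_spec in HP; rewrite HP in HPx; discriminate.
  - symmetry; apply filter_length.
Qed.

Lemma bounded_union {B} (P : A -> list B -> Prop) (M : nat) (xs : list A) :
  (forall x, exists l, length l <= M /\ P x l) ->
  (forall x l l', incl l l' -> P x l -> P x l') ->
  exists L, length L <= length xs * M /\ forall x, In x xs -> P x L.
Proof.
  intros H Hmono; induction xs as [|x xs [L [HL HP]]].
  - exists []; split; [simpl; lia | intros _ []].
  - destruct (H x) as [l [Hl Hx]]; exists (l ++ L); split.
    + rewrite length_app; simpl; lia.
    + intros y [<-|Hy]; eapply Hmono; eauto; intros z Hz; apply in_or_app; auto.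
Qed.

(* Greedy selection: keep the head, discard everything in conflict with it, recurse. *)
Lemma exists_independent_sublist (conf : A -> A -> Prop) (K : nat) l :
  (forall x y, conf x y -> conf y x) -> (forall x, conf x x) -> NoDup l ->
  (forall x t, In x l -> NoDup t -> incl t l -> (forall y, In y t -> conf x y) ->
     length t <= K) ->
  exists s, NoDup s /\ incl s l /\
    (forall x y, In x s -> In y s -> conf x y -> x = y) /\ length l <= K * length s.
Proof.
  intros Hsym Hrefl; induction l as [l IH] using (induction_ltof1 _ (@length A)).
  destruct l as [|x r]; intros Hnd Hcnt.
  { exists []; repeat split; try constructor; try easy; simpl; lia. }
  inversion Hnd as [|? ? Hxr Hr]; subst.
  set (rest := filter (fun y => negb (cdec (conf x y))) r).
  assert (Hrest : forall y, In y rest -> In y r /\ ~ conf x y).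
  { intros y Hy; apply filter_In in Hy as [Hy Hc]; split; auto.
    intros Hxy; apply cdec_spec in Hxy; rewrite Hxy in Hc; discriminate. }
  assert (Hconflicts : length (x :: filter (fun y => cdec (conf x y)) r) <= K).
  { apply (Hcnt x); [left; reflexivity | | |].
    - constructor; [|apply NoDup_filter; auto].
      intros Hx; apply filter_In in Hx; tauto.
    - intros y [<-|Hy]; [left; reflexivity|right; apply filter_In in Hy; tauto].
    - intros y [<-|Hy]; auto; apply filter_In in Hy as [_ Hy]; now apply cdec_spec. }
  pose proof (filter_length (fun y => cdec (conf x y)) r) as Hsplit.
  cbv beta in Hsplit; fold rest in Hsplit.
  destruct (IH rest) as (s & Hs & Hsr & Hsind & Hslen).
  - unfold ltof; simpl; lia.
  - apply NoDup_filter; auto.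
  - intros y t Hy Ht Htr Hyt; apply (Hcnt y t); auto.
    + right; apply Hrest; auto.
    + intros z Hz; right; apply Hrest, Htr; auto.
  - exists (x :: s); split; [|split; [|split]].
    + constructor; auto; intros Hx; apply Hxr, Hrest, Hsr; auto.
    + intros y [<-|Hy]; [left; reflexivity|right; apply Hrest, Hsr; auto].
    + intros y z [<-|Hy] [<-|Hz] Hyz; auto.
      * exfalso; apply (Hrest z (Hsr z Hz)); auto.
      * exfalso; apply (Hrest y (Hsr y Hy)); auto.
    + simpl in Hconflicts |- *; nia.
Qed.

End Lists.

Section Walks.
Context {V : Type} (adj : V -> V -> Prop).

Inductive walk (X : list V) : V -> V -> nat -> Prop :=
| walk_nil u : ~ In u X -> walk X u u 0
| walk_cons u w v n : adj u w -> ~ In u X -> walk X w v n -> walk X u v (S n).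

Definition walk_le (X : list V) u v N := exists n, n <= N /\ walk X u v n.

Definition near u v N := walk_le [] u v N.

Lemma walk_end X u v n : walk X u v n -> ~ In v X.
Proof. induction 1; auto. Qed.

Lemma walk_app X u v w n m : walk X u v n -> walk X v w m -> walk X u w (n + m).
Proof. induction 1; intros; simpl; auto; econstructor; eauto. Qed.

Lemma walk_le_trans X u v w n m :
  walk_le X u v n -> walk_le X v w m -> walk_le X u w (n + m).
Proof.
  intros [a [Ha Hu]] [b [Hb Hv]]; exists (a + b); split; [lia|]; eapply walk_app; eauto.
Qed.

Lemma walk_le_mono X u v n m : walk_le X u v n -> n <= m -> walk_le X u v m.
Proof. intros [a [Ha Hw]] Hnm; exists a; split; [lia|auto]. Qed.

Lemma near_refl u : near u u 0.
Proof. exists 0; split; auto; constructor; auto. Qed.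

Lemma near_adj u v : adj u v -> near u v 1.
Proof. exists 1; split; auto; econstructor; eauto; constructor; auto. Qed.

Lemma walk_restrict X a b n :
  walk [] a b n -> (forall w k, k <= n -> walk [] a w k -> ~ In w X) -> walk X a b n.
Proof.
  induction 1 as [u _|u x v n Hux _ _ IH]; intros Hav.
  - constructor; apply (Hav u 0); auto; constructor; auto.
  - econstructor; eauto.
    + apply (Hav u 0); [lia|constructor; auto].
    + apply IH; intros w k Hk Hw; apply (Hav w (S k)); [lia|econstructor; eauto].
Qed.

Section Symmetric.
Hypothesis adj_sym : forall u v, adj u v -> adj v u.

Lemma walk_sym X u v n : walk X u v n -> walk X v u n.
Proof.
  induction 1 as [u Hu|u x v n Hux Hu _ IH]; [constructor; auto|].
  replace (S n) with (n + 1) by lia; eapply walk_app; eauto.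
  econstructor; eauto; [eapply walk_end; eauto | constructor; auto].
Qed.

Lemma walk_le_sym X u v n : walk_le X u v n -> walk_le X v u n.
Proof. intros [a [Ha Hw]]; exists a; split; auto; apply walk_sym; auto. Qed.

End Symmetric.

Lemma chain_app_r q1 q2 : chain adj (q1 ++ q2) -> chain adj q2.
Proof.
  induction q1 as [|x q1 IH]; simpl; auto.
  intros H; apply IH; destruct (q1 ++ q2); tauto.
Qed.

Lemma last_indep (y : V) q d d' : last (y :: q) d = last (y :: q) d'.
Proof.
  revert y; induction q as [|z q IH]; intros; [reflexivity|].
  change (last (z :: q) d = last (z :: q) d'); apply IH.
Qed.

Lemma last_app_cons (q1 q2 : list V) u d : last (q1 ++ u :: q2) d = last (u :: q2) u.
Proof.
  induction q1 as [|a q1 IH]; [apply last_indep|].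
  rewrite <- IH; simpl app; destruct (q1 ++ u :: q2) eqn:E; [destruct q1; discriminate|].
  reflexivity.
Qed.

Lemma last_cons_cons (x y : V) q d : last (x :: y :: q) d = last (y :: q) y.
Proof. change (last (y :: q) d = last (y :: q) y); apply last_indep. Qed.

Lemma path_of_walk X u v n :
  walk X u v n ->
  exists p, is_path_from_to adj p u v /\ path_length p <= n /\
    forall x, In x p -> ~ In x X.
Proof.
  induction 1 as [u Hu|u x v n Hux Hu _ IH].
  { exists [u]; repeat split; simpl; auto.
    - constructor; auto; constructor.
    - congruence.
    - intros x [<-|[]]; auto. }
  destruct IH as (q & (Hnd & Hch & Hhd & Hl & Hne) & Hlen & Hav).
  destruct (classic (In u q)) as [Hin|Hnin].
  - apply in_split in Hin as (q1 & q2 & ->).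
    exists (u :: q2); unfold path_length in *; rewrite length_app in Hlen; simpl in Hlen.
    repeat split; try congruence.
    + eapply NoDup_app_remove_l; eauto.
    + eapply chain_app_r; eauto.
    + rewrite <- Hl, last_app_cons; reflexivity.
    + simpl; lia.
    + intros y Hy; apply Hav, in_or_app; right; auto.
  - destruct q as [|y q']; [congruence|]; simpl in Hhd; injection Hhd as ->.
    exists (u :: x :: q'); unfold path_length in *; simpl in Hlen.
    repeat split; auto; try congruence.
    + constructor; auto.
    + rewrite last_cons_cons; auto.
    + simpl; lia.
    + intros z [<-|Hz]; auto.
Qed.

Lemma walk_of_path X p u v :
  is_path_from_to adj p u v -> (forall x, In x p -> ~ In x X) ->
  walk X u v (path_length p).
Proof.
  intros (_ & Hch & Hhd & Hl & Hne); revert u Hch Hhd Hl Hne.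
  induction p as [|x p IH]; intros u Hch Hhd Hl Hne Hav; [congruence|].
  simpl in Hhd; injection Hhd as ->.
  destruct p as [|y p'].
  - simpl in Hl; subst; constructor; apply Hav; left; auto.
  - destruct Hch as [Hxy Hch]; unfold path_length; simpl.
    econstructor; eauto; [apply Hav; left; auto|].
    apply (IH y); auto; [rewrite <- Hl, last_cons_cons; auto | congruence |].
    intros z Hz; apply Hav; right; auto.
Qed.

Lemma dist_le_of_near u v n : near u v n -> dist_le adj u v n.
Proof.
  intros [a [Ha Hw]]; destruct (path_of_walk _ _ _ _ Hw) as (p & Hp & Hl & _).
  exists p; split; auto; lia.
Qed.

Lemma near_of_dist_le u v n : dist_le adj u v n -> near u v n.
Proof.
  intros [p [Hp Hl]]; exists (path_length p); split; auto.
  apply walk_of_path; auto.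
Qed.

Lemma is_dist_of_walk u v n : walk [] u v n -> exists d, d <= n /\ is_dist adj u v d.
Proof.
  revert u v; induction n as [n IH] using (well_founded_induction lt_wf); intros u v Hw.
  destruct (classic (exists k, k < n /\ walk [] u v k)) as [[k [Hk Hwk]]|Hmin].
  - destruct (IH k Hk u v Hwk) as [d [Hd Hdist]]; exists d; split; auto; lia.
  - exists n; split; auto.
    destruct (path_of_walk _ _ _ _ Hw) as (q & Hq & Hl & _).
    assert (Hlow : forall p, is_path_from_to adj p u v -> n <= path_length p).
    { intros p Hp; apply Nat.nlt_ge; intros Hlt; apply Hmin.
      exists (path_length p); split; auto; apply walk_of_path; auto. }
    split; auto; exists q; split; auto; specialize (Hlow q Hq); lia.
Qed.

Lemma walk_of_is_dist u v n : is_dist adj u v n -> walk [] u v n.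
Proof. intros [[p [Hp <-]] _]; apply walk_of_path; auto. Qed.

Lemma connected_is_dist : connected adj -> forall u v, exists n, is_dist adj u v n.
Proof.
  intros Hc u v; destruct (Hc u v) as [p Hp].
  destruct (is_dist_of_walk u v (path_length p)) as [d [_ Hd]]; eauto.
  apply walk_of_path; auto.
Qed.

Section BoundedDegree.
Variable D : nat.
Hypothesis degree_le :
  forall v l, NoDup l -> (forall w, In w l -> adj v w) -> length l <= D.

Lemma neighbours_list v : exists l, length l <= D /\ forall w, adj v w -> In w l.
Proof.
  apply NNPP; intros Hno.
  assert (Hk : forall k, exists l, NoDup l /\ (forall w, In w l -> adj v w) /\ length l = k).
  { induction k as [|k [l (Hnd & Hl & Hlen)]].
    - exists []; repeat split; [constructor | intros w []].
    - destruct (classic (exists w, adj v w /\ ~ In w l)) as [[w [Hw Hwl]]|Hall].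
      + exists (w :: l); repeat split; [constructor; auto | | simpl; lia].
        intros z [<-|Hz]; auto.
      + exfalso; apply Hno; exists l; split; [apply (degree_le v); auto|].
        intros w Hw; apply NNPP; intros Hwl; apply Hall; eauto. }
  destruct (Hk (S D)) as [l (Hnd & Hl & Hlen)]; specialize (degree_le v l Hnd Hl); lia.
Qed.

Lemma ball_list N v : exists l, length l <= (D + 1) ^ N /\ forall w, near v w N -> In w l.
Proof.
  revert v; induction N as [|N IH]; intros v.
  - exists [v]; split; [simpl; lia|].
    intros w [n [Hn Hw]]; assert (n = 0) by lia; subst; inversion Hw; subst; left; auto.
  - destruct (neighbours_list v) as [l [Hl Hnb]].
    destruct (bounded_union (fun x L => forall w, near x w N -> In w L) ((D + 1) ^ N) l)
      as [L [HL HLin]]; [apply IH | intros x l1 l2 Hi Hp w Hw; apply Hi; auto |].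
    exists (v :: L); split.
    + assert (1 <= (D + 1) ^ N) by (apply Nat.neq_0_lt_0, Nat.pow_nonzero; lia).
      simpl length; rewrite Nat.pow_succ_r'; nia.
    + intros w [n [Hn Hw]]; inversion Hw as [|? x ? k Hvx _ Hxw]; subst; [left; auto|].
      right; apply (HLin x); auto; exists k; split; auto; lia.
Qed.

Lemma ball_thickening N X :
  exists Y, NoDup Y /\ length Y <= length X * (D + 1) ^ N /\
    forall x z, In x X -> near x z N -> In z Y.
Proof.
  destruct (bounded_union (fun x L => forall z, near x z N -> In z L) ((D + 1) ^ N) X)
    as [L [HL HLin]]; [apply ball_list | intros x l1 l2 Hi Hp z Hz; apply Hi; auto |].
  pose (eq_dec := fun x y : V => excluded_middle_informative (x = y)).
  exists (nodup eq_dec L); repeat split.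
  - apply NoDup_nodup.
  - pose proof (NoDup_incl_length (NoDup_nodup eq_dec L)
      (fun z Hz => proj1 (nodup_In eq_dec L z) Hz)); lia.
  - intros x z Hx Hz; apply nodup_In; eauto.
Qed.

End BoundedDegree.
End Walks.

Definition ends {W : Type} (q : W * W) : list W := [fst q; snd q].

Definition meets {W : Type} (q1 q2 : W * W) : Prop :=
  exists z, In z (ends q1) /\ In z (ends q2).

Lemma NoDup_endpoints {W : Type} (Q : list (W * W)) :
  (forall q, In q Q -> fst q <> snd q) ->
  (forall q1 q2, In q1 Q -> In q2 Q -> meets q1 q2 -> q1 = q2) ->
  NoDup Q -> NoDup (map fst Q ++ map snd Q).
Proof.
  intros Hloop Hind HQ; apply NoDup_app.
  - apply NoDup_map_NoDup_ForallPairs; auto; intros q1 q2 H1 H2 E.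
    apply Hind; auto; exists (fst q1); simpl; rewrite E at 2; auto.
  - apply NoDup_map_NoDup_ForallPairs; auto; intros q1 q2 H1 H2 E.
    apply Hind; auto; exists (snd q1); simpl; rewrite E at 2; auto.
  - intros a H1 H2; apply in_map_iff in H1 as [q1 [<- H1]], H2 as [q2 [E H2]].
    assert (q2 = q1) as -> by (apply Hind; auto; exists (fst q1); simpl; rewrite E at 1; auto).
    apply (Hloop q1); auto.
Qed.

Section UFOs.
Context {V : Type} (adj : V -> V -> Prop).

Lemma matching_pairs U O k :
  NoDup U -> complete_matching_le adj U O k ->
  exists P : list (V * V), map fst P = U /\ NoDup (map snd P) /\
    forall q, In q P -> In (snd q) O /\ near adj (fst q) (snd q) k.
Proof.
  intros HU (M & HMin & _ & HMinj & HMtot & _ & HMdist).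
  assert (Hsub : forall U1, NoDup U1 -> incl U1 U -> exists P : list (V * V),
            map fst P = U1 /\ NoDup (map snd P) /\ forall q, In q P -> M (fst q) (snd q)).
  { induction U1 as [|a U1 IH]; intros Hnd Hinc.
    - exists []; repeat split; [constructor | intros q []].
    - inversion Hnd as [|? ? Ha Hnd1]; subst.
      destruct IH as (P & HPU & HPnd & HPM); auto; [intros z Hz; apply Hinc; right; auto|].
      destruct (HMtot a) as [b Hab]; [apply Hinc; left; auto|].
      exists ((a, b) :: P); repeat split.
      + simpl; congruence.
      + constructor; auto; intros Hb; apply in_map_iff in Hb as [q [Hq HqP]].
        pose proof (HPM q HqP) as HMq; simpl in Hq; rewrite Hq in HMq.
        apply Ha; rewrite <- HPU, <- (HMinj _ _ _ HMq Hab); apply in_map; auto.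
      + intros q' [<-|Hq']; auto. }
  destruct (Hsub U HU (incl_refl U)) as (P & HPU & HPnd & HPM).
  exists P; split; [|split]; auto; intros q Hq; split.
  - apply (HMin _ _ (HPM q Hq)).
  - apply near_of_dist_le, HMdist, HPM; auto.
Qed.

Lemma ufo_walk_sep m k r U F O u o n :
  is_UFO adj m k r U F O -> In u U -> In o O -> walk_le adj F u o n -> r <= n.
Proof.
  intros (_ & _ & _ & _ & _ & _ & _ & _ & _ & Hsep) Hu Ho [a [Ha Hw]].
  destruct (path_of_walk adj _ _ _ _ Hw) as (p & Hp & Hl & Hav).
  destruct (Hsep p u o Hu Ho Hp) as [[x [Hx HxF]]|Hr]; [exfalso; apply (Hav x)|]; auto; lia.
Qed.

Lemma ufo_F_nonempty m k r U F O :
  is_UFO adj m k r U F O -> k < r -> exists w, In w F.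
Proof.
  intros Hufo Hkr; pose proof Hufo as (_ & _ & _ & _ & _ & _ & HUne & _ & Hmatch & Hsep).
  destruct U as [|u U']; [congruence|].
  destruct Hmatch as (M & HMin & _ & _ & HMtot & _ & HMdist).
  destruct (HMtot u) as [o Huo]; [left; auto|].
  destruct (HMdist _ _ Huo) as [p [Hp Hl]].
  destruct (Hsep p u o (or_introl eq_refl) (proj2 (HMin _ _ Huo)) Hp) as [[x [_ Hx]]|Hr];
    eauto; lia.
Qed.

Lemma is_UFO_of_pairs m k r (Q : list (V * V)) F :
  NoDup F -> Q <> [] -> NoDup (map fst Q ++ map snd Q) ->
  (forall q, In q Q -> ~ In (fst q) F /\ ~ In (snd q) F /\ dist_le adj (fst q) (snd q) k) ->
  m * length F <= length Q ->
  (forall q1 q2 p, In q1 Q -> In q2 Q -> is_path_from_to adj p (fst q1) (snd q2) ->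
     (exists x, In x p /\ In x F) \/ r <= path_length p) ->
  is_UFO adj m k r (map fst Q) F (map snd Q).
Proof.
  intros HF HQne Hends HQ Hcard Hsep.
  pose proof (NoDup_app_remove_r _ _ Hends) as Hfst.
  pose proof (NoDup_app_remove_l _ _ Hends) as Hsnd.
  repeat split; auto.
  - intros a Ha; apply in_map_iff in Ha as [q [<- Hq]]; apply (HQ q Hq).
  - intros a Ha HaO; apply in_split in Ha as (l1 & l2 & E); rewrite E in Hends.
    rewrite <- app_assoc in Hends; apply NoDup_remove_2 in Hends.
    apply Hends, in_or_app; right; apply in_or_app; auto.
  - intros a HaF Ha; apply in_map_iff in Ha as [q [<- Hq]]; apply (proj1 (proj2 (HQ q Hq))); auto.
  - destruct Q; [congruence|discriminate].
  - rewrite length_map; auto.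
  - exists (fun a b => In (a, b) Q); split; [|split; [|split; [|split; [|split]]]].
    + intros a b Hab; split; [apply (in_map fst) in Hab | apply (in_map snd) in Hab]; auto.
    + intros a b b' H1 H2; pose proof (NoDup_map_inj fst _ _ _ Hfst H1 H2 eq_refl); congruence.
    + intros a a' b H1 H2; pose proof (NoDup_map_inj snd _ _ _ Hsnd H1 H2 eq_refl); congruence.
    + intros a Ha; apply in_map_iff in Ha as [[a' b] [<- Hq]]; eauto.
    + intros b Hb; apply in_map_iff in Hb as [[a b'] [<- Hq]]; eauto.
    + intros a b Hab; apply (HQ (a, b) Hab).
  - intros p u o Hu Ho Hp; apply in_map_iff in Hu as [q1 [<- Hq1]], Ho as [q2 [<- Hq2]]; eauto.
Qed.

End UFOs.

Lemma quasi_isometry_coarse {V V' : Type} (adj : V -> V -> Prop) (adj' : V' -> V' -> Prop) :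
  connected adj -> connected adj' -> quasi_isometric adj adj' ->
  exists (f : V -> V') (g : V' -> V) (K : nat),
    (forall x y n, near adj x y n -> near adj' (f x) (f y) (K * n + K)) /\
    (forall x y n, near adj' (f x) (f y) n -> near adj x y (K * n + K)) /\
    (forall v', near adj' v' (f (g v')) K).
Proof.
  intros Hc Hc' (f & A & B & C & HA & HB & HC & Hqi & Hcov).
  destruct (INR_unbounded (A + B + A * B + C)) as [K HK].
  assert (HKA : (A <= INR K)%R) by nra.
  assert (HKB : (B <= INR K)%R) by nra.
  assert (HKAB : (A * B <= INR K)%R) by nra.
  assert (HKC : (C <= INR K)%R) by nra.
  assert (Hsec : forall v', exists v, near adj' v' (f v) K).
  { intros v'; destruct (Hcov v') as (v & n & Hd & Hn); exists v, n; split.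
    - apply INR_le; lra.
    - apply walk_of_is_dist; auto. }
  destruct (choice _ Hsec) as [g Hg].
  exists f, g, K; split; [|split]; auto.
  - intros x y n [a [Ha Hw]].
    destruct (is_dist_of_walk adj x y a Hw) as [d [Hd Hdist]].
    destruct (connected_is_dist adj' Hc' (f x) (f y)) as [d' Hdist'].
    destruct (Hqi _ _ _ _ Hdist Hdist') as [_ Hup].
    exists d'; split; [|apply walk_of_is_dist; auto].
    apply INR_le; rewrite plus_INR, mult_INR.
    pose proof (pos_INR d); apply le_INR in Hd, Ha; nra.
  - intros x y n [a [Ha Hw]].
    destruct (is_dist_of_walk adj' (f x) (f y) a Hw) as [d' [Hd Hdist']].
    destruct (connected_is_dist adj Hc x y) as [d Hdist].
    destruct (Hqi _ _ _ _ Hdist Hdist') as [Hlow _].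
    exists d; split; [|apply walk_of_is_dist; auto].
    apply INR_le; rewrite plus_INR, mult_INR.
    assert (Hd_le : (INR d <= A * (INR d' + B))%R).
    { replace (INR d) with (A * (INR d / A))%R by (field; lra).
      apply Rmult_le_compat_l; lra. }
    pose proof (pos_INR d'); apply le_INR in Hd, Ha; nra.
Qed.

Section Transfer.
Context {V V' : Type} (adj : V -> V -> Prop) (adj' : V' -> V' -> Prop).
Hypothesis adj_sym : forall u v, adj u v -> adj v u.
Hypothesis adj'_sym : forall u v, adj' u v -> adj' v u.
Variables (f : V -> V') (g : V' -> V) (K : nat).
Hypothesis f_expand : forall x y n, near adj x y n -> near adj' (f x) (f y) (K * n + K).
Hypothesis f_contract : forall x y n, near adj' (f x) (f y) n -> near adj x y (K * n + K).
Hypothesis g_section : forall v', near adj' v' (f (g v')) K.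

Definition g_scale := K * (2 * K + 1) + K.
(* Large enough for each use of [walk_avoids] below. *)
Definition transfer_radius := K * g_scale + K * (K * K + K) + 2 * K.
(* 2 (K*K + K) pays for the detours u -> g (f u) and g (f o) -> o; the term k + 1 makes F
   nonempty. *)
Definition ufo_range r' k := 2 * (K * K + K) + g_scale * r' + k + 1.

Lemma near_of_same_image x y : f x = f y -> near adj x y K.
Proof.
  intros E; apply (walk_le_mono _ _ _ _ (K * 0 + K)); [|lia].
  apply f_contract; rewrite E; apply near_refl.
Qed.

Lemma near_g_of_adj x' y' : adj' x' y' -> near adj (g x') (g y') g_scale.
Proof.
  intros Hxy; apply f_contract.
  apply (walk_le_mono _ _ _ _ (K + (1 + K))); [|lia].
  apply (walk_le_trans _ _ _ x'); [apply (walk_le_sym adj' adj'_sym), g_section|].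
  apply (walk_le_trans _ _ _ y'); [apply near_adj; auto | apply g_section].
Qed.

Definition fpair (q : V * V) : V' * V' := (f (fst q), f (snd q)).

Section Thickening.
Variables (F : list V) (F' : list V').
Hypothesis F'_thick : forall w z, In w F -> near adj' (f w) z transfer_radius -> In z F'.

(* Every vertex of the walk maps within [transfer_radius] of [x'], so it cannot lie in F. *)
Lemma walk_avoids x' a b e N :
  ~ In x' F' -> near adj' x' (f a) e -> near adj a b N -> e + (K * N + K) <= transfer_radius ->
  walk_le adj F a b N.
Proof.
  intros Hx' Hx'a [n [Hn Hw]] Hrad; exists n; split; auto.
  apply walk_restrict; auto; intros w k Hk Hwk HwF; apply Hx', (F'_thick w); auto.
  apply walk_le_sym; auto.
  apply (walk_le_mono _ _ _ _ (e + (K * k + K))); [|nia].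
  apply (walk_le_trans _ _ _ (f a)); auto.
  apply f_expand; exists k; split; auto.
Qed.

Lemma walk_pullback x' y' n :
  walk adj' F' x' y' n -> walk_le adj F (g x') (g y') (g_scale * n).
Proof.
  induction 1 as [u Hu|u x v n Hux Hu _ IH].
  - rewrite Nat.mul_0_r; apply (walk_avoids u _ _ K 0); auto.
    + apply near_refl.
    + unfold transfer_radius; lia.
  - replace (g_scale * S n) with (g_scale + g_scale * n) by lia.
    apply (walk_le_trans _ _ _ (g x)); auto.
    apply (walk_avoids u _ _ K); auto.
    + apply near_g_of_adj; auto.
    + unfold transfer_radius; lia.
Qed.

Lemma walk_to_g u : ~ In (f u) F' -> walk_le adj F u (g (f u)) (K * K + K).
Proof.
  intros Hu; apply (walk_avoids (f u) _ _ 0 _ Hu (near_refl adj' (f u))).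
  - apply f_contract, g_section.
  - unfold transfer_radius; nia.
Qed.

Lemma walk_transfer u o n :
  ~ In (f u) F' -> ~ In (f o) F' -> walk adj' F' (f u) (f o) n ->
  walk_le adj F u o (2 * (K * K + K) + g_scale * n).
Proof.
  intros Hu Ho Hw; replace (2 * (K * K + K) + g_scale * n)
    with ((K * K + K) + g_scale * n + (K * K + K)) by lia.
  apply (walk_le_trans _ _ _ (g (f o))); [apply (walk_le_trans _ _ _ (g (f u)))|].
  - apply walk_to_g; auto.
  - apply walk_pullback; auto.
  - apply walk_le_sym, walk_to_g; auto.
Qed.

Lemma ufo_walk_sep_transfer m k r' U O u o n :
  is_UFO adj m k (ufo_range r' k) U F O -> In u U -> In o O ->
  ~ In (f u) F' -> ~ In (f o) F' -> walk adj' F' (f u) (f o) n -> r' < n.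
Proof.
  intros Hufo Hu Ho Hfu Hfo Hw.
  pose proof (ufo_walk_sep adj _ _ _ _ _ _ _ _ _ Hufo Hu Ho (walk_transfer _ _ _ Hfu Hfo Hw)).
  unfold ufo_range in *; nia.
Qed.

Lemma ufo_of_pulled_pairs m0 m k r' U O S :
  is_UFO adj m0 k (ufo_range r' k) U F O -> NoDup F' -> NoDup S -> S <> [] ->
  (forall q1 q2, In q1 S -> In q2 S -> meets (fpair q1) (fpair q2) -> q1 = q2) ->
  (forall q, In q S -> In (fst q) U /\ In (snd q) O /\ near adj (fst q) (snd q) k) ->
  (forall q, In q S -> ~ In (f (fst q)) F' /\ ~ In (f (snd q)) F') ->
  m * length F' <= length S ->
  is_UFO adj' m (K * k + K) r' (map fst (map fpair S)) F' (map snd (map fpair S)).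
Proof.
  intros Hufo HF' HS HSne HSind HSUO HSF' Hcard.
  apply is_UFO_of_pairs; auto.
  - destruct S; [tauto | discriminate].
  - apply NoDup_endpoints.
    + intros q' Hq' E; apply in_map_iff in Hq' as [q [<- Hq]].
      destruct (HSUO q Hq) as (Hu & Ho & _); destruct (HSF' q Hq) as [Hfu Hfo].
      assert (Hw : walk adj' F' (f (fst q)) (f (snd q)) 0)
        by (simpl in E; rewrite E; constructor; auto).
      pose proof (ufo_walk_sep_transfer _ _ _ _ _ _ _ _ Hufo Hu Ho Hfu Hfo Hw); lia.
    + intros q1' q2' H1 H2 Hmeet; apply in_map_iff in H1 as [q1 [<- H1]], H2 as [q2 [<- H2]].
      f_equal; apply HSind; auto.
    + apply NoDup_map_NoDup_ForallPairs; auto; intros q1 q2 H1 H2 E.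
      apply HSind; auto; exists (f (fst q1)); rewrite <- E; split; left; auto.
  - intros q' Hq'; apply in_map_iff in Hq' as [q [<- Hq]].
    destruct (HSF' q Hq) as [Hfu Hfo]; repeat split; auto.
    apply dist_le_of_near, f_expand, HSUO; auto.
  - rewrite !length_map; auto.
  - intros q1' q2' p H1 H2 Hp; apply in_map_iff in H1 as [q1 [<- H1]], H2 as [q2 [<- H2]].
    destruct (classic (exists x, In x p /\ In x F')) as [Hmeet|Hfree]; [left; auto|right].
    destruct (HSUO q1 H1) as (Hu & _); destruct (HSUO q2 H2) as (_ & Ho & _).
    apply Nat.lt_le_incl, (ufo_walk_sep_transfer _ _ _ _ _ _ _ _ Hufo Hu Ho);
      try apply HSF'; auto.
    apply walk_of_path; auto; intros x Hx HxF; apply Hfree; eauto.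
Qed.

End Thickening.

Lemma drop_pairs_meeting (F' : list V') S :
  NoDup S -> (forall q1 q2, In q1 S -> In q2 S -> meets (fpair q1) (fpair q2) -> q1 = q2) ->
  exists S', NoDup S' /\ incl S' S /\
    (forall q, In q S' -> ~ In (f (fst q)) F' /\ ~ In (f (snd q)) F') /\
    length S <= length S' + 2 * length F'.
Proof.
  intros HS Hind.
  destruct (split_by_cases (fun q => ~ In (f (fst q)) F' /\ ~ In (f (snd q)) F')
              (fun q => In (f (fst q)) F' \/ In (f (snd q)) F') S HS)
    as (good & bad & Hgood & Hbad & HgS & HbS & Hg & Hb & Hlen).
  { intros q _; destruct (classic (In (f (fst q)) F')); tauto. }
  destruct (split_by_cases (fun q => In (f (fst q)) F') (fun q => In (f (snd q)) F') bad Hbad Hb)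
    as (b1 & b2 & Hb1 & Hb2 & Hb1S & Hb2S & Hb1F & Hb2F & Hblen).
  assert (length b1 <= length F').
  { apply (length_le_of_inj_into (fun q => f (fst q))); auto.
    intros q1 q2 H1 H2 E; apply Hind; auto; exists (f (fst q1)); simpl; rewrite E at 2; auto. }
  assert (length b2 <= length F').
  { apply (length_le_of_inj_into (fun q => f (snd q))); auto.
    intros q1 q2 H1 H2 E; apply Hind; auto; exists (f (snd q1)); simpl; rewrite E at 2; auto. }
  exists good; split; [|split; [|split]]; auto; lia.
Qed.

Section Degrees.
Variables D D' : nat.
Hypothesis degree_le : forall v l, NoDup l -> (forall w, In w l -> adj v w) -> length l <= D.
Hypothesis degree'_le : forall v l, NoDup l -> (forall w, In w l -> adj' v w) -> length l <= D'.

Lemma collisions_bounded P p t :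
  NoDup (map fst P) -> NoDup (map snd P) -> In p P -> NoDup t -> incl t P ->
  (forall q, In q t -> meets (fpair p) (fpair q)) -> length t <= 4 * (D + 1) ^ K.
Proof.
  intros Hfst Hsnd Hp Ht HtP Hmeet.
  destruct (ball_list adj D degree_le K (fst p)) as (B1 & HB1 & HB1in).
  destruct (ball_list adj D degree_le K (snd p)) as (B2 & HB2 & HB2in).
  assert (Hside : forall h : V * V -> V, NoDup (map h P) -> forall s, NoDup s -> incl s t ->
            (forall q, In q s -> In (f (h q)) (ends (fpair p))) -> length s <= 2 * (D + 1) ^ K).
  { intros h Hh s Hs HsP Hsp.
    enough (length s <= length (B1 ++ B2)) by (rewrite length_app in *; lia).
    apply (length_le_of_inj_into h); auto.
    - intros x y Hx Hy; apply (NoDup_map_inj h P); auto.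
    - intros q Hq; apply in_or_app; destruct (Hsp q Hq) as [E|[E|[]]].
      + left; apply HB1in, near_of_same_image; auto.
      + right; apply HB2in, near_of_same_image; auto. }
  destruct (split_by_cases (fun q => In (f (fst q)) (ends (fpair p)))
              (fun q => In (f (snd q)) (ends (fpair p))) t Ht)
    as (t1 & t2 & Ht1 & Ht2 & Ht1t & Ht2t & Ht1p & Ht2p & Hlen).
  { intros q Hq; destruct (Hmeet q Hq) as (z & Hzp & [<-|[<-|[]]]); [left|right]; exact Hzp. }
  pose proof (Hside fst Hfst t1 Ht1 Ht1t Ht1p).
  pose proof (Hside snd Hsnd t2 Ht2 Ht2t Ht2p).
  lia.
Qed.

(* 4 (D+1)^K bounds the pairs colliding with a given pair, so at least (m+3)|F'| pairs survive
   the thinning; at most 2|F'| of them meet F', and |F'| >= 1 leaves a nonempty remainder. *)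
Definition ufo_multiplier m := 4 * (D + 1) ^ K * ((m + 3) * (D' + 1) ^ transfer_radius).

Lemma ufo_transfer m k r' U F O :
  is_UFO adj (ufo_multiplier m) k (ufo_range r' k) U F O ->
  exists U' F' O', is_UFO adj' m (K * k + K) r' U' F' O'.
Proof.
  intros Hufo; pose proof Hufo as (HU & _ & _ & _ & _ & _ & _ & Hcard & Hmatch & _).
  destruct (matching_pairs adj U O k HU Hmatch) as (P & HPU & HPsnd & HPq).
  assert (HPfst : NoDup (map fst P)) by (rewrite HPU; auto).
  assert (HP : NoDup P) by (apply (NoDup_map_inv fst); auto).
  destruct (ufo_F_nonempty adj _ _ _ _ _ _ Hufo) as [w0 Hw0]; [unfold ufo_range; lia|].
  destruct (ball_thickening adj' D' degree'_le transfer_radius (map f F))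
    as (F' & HF' & HF'len & HF'thick).
  assert (F'_thick : forall w z, In w F -> near adj' (f w) z transfer_radius -> In z F')
    by (intros w z Hw; apply HF'thick, in_map; auto).
  destruct (exists_independent_sublist (fun q1 q2 => meets (fpair q1) (fpair q2))
              (4 * (D + 1) ^ K) P) as (S & HS & HSP & HSind & HPS); auto.
  { intros q1 q2 (z & H1 & H2); exists z; auto. }
  { intros q; exists (f (fst q)); split; left; auto. }
  { intros p t Hp Ht HtP Hmeet; apply (collisions_bounded P p t); auto. }
  destruct (drop_pairs_meeting F' S HS HSind) as (S' & HS' & HS'S & HS'F' & HSS').
  assert (HF'pos : 1 <= length F').
  { destruct F' as [|z F'']; [|simpl; lia].
    exfalso; apply (F'_thick w0 (f w0) Hw0), (walk_le_mono _ _ _ _ 0); [apply near_refl|lia]. }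
  assert (HSlow : (m + 3) * (D' + 1) ^ transfer_radius * length F <= length S).
  { apply (Nat.mul_le_mono_pos_l _ _ (4 * (D + 1) ^ K)).
    - assert (0 < (D + 1) ^ K) by (apply Nat.neq_0_lt_0, Nat.pow_nonzero; lia); lia.
    - rewrite <- (length_map fst P), HPU in HPS; unfold ufo_multiplier in Hcard; nia. }
  rewrite length_map in HF'len.
  assert (HS'len : m * length F' <= length S' /\ S' <> []).
  { split; [nia|]; intros ->; simpl in HSS'; nia. }
  assert (HS'P : forall q, In q S' -> In (fst q) U /\ In (snd q) O /\ near adj (fst q) (snd q) k).
  { intros q Hq; specialize (HSP q (HS'S q Hq)); destruct (HPq q HSP) as [HO Hconflicts].
    repeat split; auto; rewrite <- HPU; apply in_map; auto. }
  exists (map fst (map fpair S')), F', (map snd (map fpair S')).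
  apply (ufo_of_pulled_pairs F F' F'_thick _ _ _ _ _ _ _ Hufo); try tauto.
  intros q1 q2 H1 H2; apply HSind; auto.
Qed.

End Degrees.
End Transfer.

Theorem theoremA (V V' : Type) (adj : V -> V -> Prop) (adj' : V' -> V' -> Prop) :
  simple_graph adj -> simple_graph adj' ->
  connected adj -> connected adj' ->
  bounded_degree adj -> bounded_degree adj' ->
  quasi_isometric adj adj' ->
  extraterrestrial adj -> extraterrestrial adj'.
Proof.
  intros [Hsym _] [Hsym' _] Hc Hc' [D HD] [D' HD'] Hqi HE.
  destruct (quasi_isometry_coarse adj adj' Hc Hc' Hqi)
    as (f & g & K & Hexpand & Hcontract & Hsection).
  intros m; destruct (HE (ufo_multiplier K D D' m)) as [k Hk].
  exists (K * k + K); intros r'.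
  destruct (Hk (ufo_range K r' k)) as (U & F & O & Hufo).
  exact (ufo_transfer adj adj' Hsym Hsym' f g K Hexpand Hcontract Hsection
           D D' HD HD' m k r' U F O Hufo).
Qed.
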